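(* For any complete chain $\mathbf{C}$, the pointed residuated lattice $\mathbf{Res}(\mathbf{C})=\langle \mathrm{Res}(\mathbf{C}),\wedge,\vee,\circ,\backslash,/,\mathrm{id},p\rangle$ is simple, i.e., its only congruences are the identity relation and the total relation.
   Context: Let $\mathbf{C}$ be a complete chain with least element $0$ and greatest element $\infty$. $\mathrm{Res}(\mathbf{C})$ is the set of maps $C\to C$ preserving arbitrary joins, with pointwise $\wedge,\vee$, composition $\circ$, identity map $\mathrm{id}$, residuals $f\backslash g=\bigvee\{h\mid f\circ h\le g\}$ and $g/f=\bigvee\{h\mid h\circ f\le g\}$, and the constant $p\colon x\mapsto\bigvee\{y\in C\mid y<x\}$. *)

(* a complete chain is an orderType (total order) together
   with a supremum operator on arbitrary subsets (given as predicates). *)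
From mathcomp Require Import all_boot all_order.
Set Implicit Arguments. Unset Strict Implicit. Unset Printing Implicit Defensive.
Import Order.TTheory.
Local Open Scope order_scope.

Section ResDefs.
Context {d : Order.disp_t} {T : orderType d}.

Definition is_ub (A : T -> Prop) (x : T) := forall y, A y -> y <= x.
Definition is_lub (A : T -> Prop) (x : T) :=
  is_ub A x /\ forall z, is_ub A z -> x <= z.

Definition complete_sup (sup : (T -> Prop) -> T) :=
  forall A, is_lub A (sup A).

Variable sup : (T -> Prop) -> T.

Definition img (f : T -> T) (A : T -> Prop) : T -> Prop :=
  fun y => exists2 x, A x & f x = y.

Definition join_preserving (f : T -> T) :=
  forall A, f (sup A) = sup (img f A).

Definition Res (f : T -> T) := join_preserving f.

Definition fmeet (f g : T -> T) : T -> T := fun x => Order.min (f x) (g x).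
Definition fjoin (f g : T -> T) : T -> T := fun x => Order.max (f x) (g x).
Definition fcomp (f g : T -> T) : T -> T := fun x => f (g x).
Definition fid : T -> T := fun x => x.
Definition fle (f g : T -> T) := forall x, f x <= g x.

(* joins in Res(C) are pointwise *)
Definition ldiv (f g : T -> T) : T -> T :=
  fun x => sup (fun y => exists h, [/\ Res h, fle (fcomp f h) g & y = h x]).
Definition rdiv (g f : T -> T) : T -> T :=
  fun x => sup (fun y => exists h, [/\ Res h, fle (fcomp h f) g & y = h x]).

Definition pmap : T -> T := fun x => sup (fun y => y < x).

(* congruence of the algebra <Res(C), meet, join, o, \, /, id, p>
   (nullary operations id and p impose no condition) *)
Definition res_congruence (theta : (T -> T) -> (T -> T) -> Prop) :=
  [/\ (forall f, Res f -> theta f f),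
      (forall f g, Res f -> Res g -> theta f g -> theta g f),
      (forall f g h, Res f -> Res g -> Res h -> theta f g -> theta g h -> theta f h)
    & forall f f' g g', Res f -> Res f' -> Res g -> Res g' ->
        theta f f' -> theta g g' ->
        [/\ theta (fmeet f g) (fmeet f' g'),
            theta (fjoin f g) (fjoin f' g'),
            theta (fcomp f g) (fcomp f' g'),
            theta (ldiv f g) (ldiv f' g')
          & theta (rdiv f g) (rdiv f' g')]].

End ResDefs.

(* If a congruence identifies two distinct join-preserving maps f, g, say
   f a < g a, then sandwiching them between the step maps
   [step 0 a] (which sends every x > 0 to a) and [step (f a) oo] turns f into
   the constant map 0 and g into the map [top] sending every x > 0 to oo.
   So 0 and [top] are congruent, and joining with an arbitrary h makes h
   congruent to [h \/ top = top]; hence all elements are congruent. *)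
From mathcomp Require Import all_boot all_order.
From Stdlib Require Import Classical FunctionalExtensionality PropExtensionality.
Set Implicit Arguments.
Unset Strict Implicit.
Import Order.TTheory.
Local Open Scope order_scope.

Section CompleteChain.
Context {d : Order.disp_t} {T : orderType d}.
Variable sup : (T -> Prop) -> T.
Hypothesis Hsup : complete_sup sup.

Definition zero : T := sup (fun _ => False).
Definition infty : T := sup (fun _ => True).

Lemma sup_le A z : is_ub A z -> sup A <= z.
Proof. exact: (proj2 (Hsup A)). Qed.

Lemma le_sup A y : A y -> y <= sup A.
Proof. exact: (proj1 (Hsup A)). Qed.

Lemma zero_le y : zero <= y.
Proof. exact: sup_le. Qed.

Lemma le_infty y : y <= infty.
Proof. exact: le_sup. Qed.

Lemma le_zero x : (x <= zero) = (x == zero).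
Proof. by rewrite eq_le zero_le andbT. Qed.

Lemma not_sup_le A c : ~~ (sup A <= c) -> exists2 x, A x & ~~ (x <= c).
Proof.
move/negP=> supAc; apply: NNPP => noA; apply: supAc; apply: sup_le => y Ay.
by apply: NNPP => /negP yc; apply: noA; exists y.
Qed.

Lemma Res_zero f : Res sup f -> f zero = zero.
Proof.
move=> Rf; apply/eqP; rewrite -le_zero /zero Rf.
by apply: sup_le => _ [x []].
Qed.

Lemma Res_comp f g : Res sup f -> Res sup g -> Res sup (fcomp f g).
Proof.
move=> Rf Rg A; rewrite /fcomp Rg Rf; congr sup.
apply: functional_extensionality => y; apply: propositional_extensionality.
split=> [[_ [x Ax <-] <-]|[x Ax <-]]; first by exists x.
by exists (g x) => //; exists x.
Qed.

Definition step (c e : T) : T -> T := fun x => if x <= c then zero else e.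

Lemma Res_step c e : Res sup (step c e).
Proof.
move=> A; rewrite /step; apply/eqP; rewrite eq_le; case: ifP => [supAc|/negbT].
  rewrite zero_le /=; apply: sup_le => _ [x Ax <-].
  by rewrite (le_trans (le_sup Ax) supAc).
case/not_sup_le=> x Ax /negbTE xc; apply/andP; split.
  by apply: le_sup; exists x; rewrite ?xc.
by apply: sup_le => _ [y _ <-]; case: ifP => // _; apply: zero_le.
Qed.

Definition fzero : T -> T := fun _ => zero.
Definition ftop : T -> T := step zero infty.

Lemma Res_fzero : Res sup fzero.
Proof.
by move=> A; apply/eqP; rewrite eq_sym -le_zero; apply: sup_le => _ [x _ <-].
Qed.

Lemma Res_ftop : Res sup ftop.
Proof. exact: Res_step. Qed.

Lemma step_sandwich f a c : Res sup f ->
  fcomp (step c infty) (fcomp f (step zero a)) = if f a <= c then fzero else ftop.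
Proof.
move=> Rf; apply: functional_extensionality => x.
rewrite /fcomp /ftop /fzero /step.
by case fac: (f a <= c) => /=; case: (x <= zero); rewrite ?(Res_zero Rf) ?zero_le ?fac.
Qed.

Lemma fjoin_fzero h : fjoin h fzero = h.
Proof.
by apply: functional_extensionality => x; rewrite /fjoin /fzero /= max_l // zero_le.
Qed.

Lemma fjoin_ftop h : Res sup h -> fjoin h ftop = ftop.
Proof.
move=> Rh; apply: functional_extensionality => x; rewrite /fjoin /ftop /step.
case: ifP => [|_]; last by rewrite max_r // le_infty.
by rewrite le_zero => /eqP ->; rewrite (Res_zero Rh) maxxx.
Qed.

Variable theta : (T -> T) -> (T -> T) -> Prop.
Hypothesis Hcong : res_congruence sup theta.

Lemma cong_refl f : Res sup f -> theta f f.
Proof. by case: Hcong => + _ _ _; apply. Qed.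

Lemma cong_sym f g : Res sup f -> Res sup g -> theta f g -> theta g f.
Proof. by case: Hcong => _ + _ _; apply. Qed.

Lemma cong_trans f g h : Res sup f -> Res sup g -> Res sup h ->
  theta f g -> theta g h -> theta f h.
Proof. by case: Hcong => _ _ + _; apply. Qed.

Lemma cong_join f f' g g' : Res sup f -> Res sup f' -> Res sup g -> Res sup g' ->
  theta f f' -> theta g g' -> theta (fjoin f g) (fjoin f' g').
Proof. by case: Hcong => _ _ _ cong Rf Rf' Rg Rg' ff' gg'; case: (cong f f' g g'). Qed.

Lemma cong_comp f f' g g' : Res sup f -> Res sup f' -> Res sup g -> Res sup g' ->
  theta f f' -> theta g g' -> theta (fcomp f g) (fcomp f' g').
Proof. by case: Hcong => _ _ _ cong Rf Rf' Rg Rg' ff' gg'; case: (cong f f' g g'). Qed.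

Lemma cong_fzero_ftop_of_lt f g a : Res sup f -> Res sup g ->
  theta f g -> f a < g a -> theta fzero ftop.
Proof.
move=> Rf Rg fg lt_fga.
have Rl := Res_step zero a; have Rk := Res_step (f a) infty.
have fl_gl : theta (fcomp f (step zero a)) (fcomp g (step zero a)).
  exact: cong_comp (cong_refl Rl).
have := cong_comp Rk Rk (Res_comp Rf Rl) (Res_comp Rg Rl) (cong_refl Rk) fl_gl.
by rewrite !step_sandwich // lexx leNgt lt_fga.
Qed.

Lemma cong_fzero_ftop f g : Res sup f -> Res sup g ->
  theta f g -> f <> g -> theta fzero ftop.
Proof.
move=> Rf Rg fg f_neq_g.
have [a fga] : exists a, f a <> g a.
  apply: NNPP => fg_eq; apply/f_neq_g/functional_extensionality => a.
  by apply: NNPP => fga; apply: fg_eq; exists a.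
case: (ltgtP (f a) (g a)) => // lt_a; first exact: cong_fzero_ftop_of_lt lt_a.
exact: cong_fzero_ftop_of_lt (cong_sym Rf Rg fg) lt_a.
Qed.

Lemma cong_ftop h : theta fzero ftop -> Res sup h -> theta h ftop.
Proof.
move=> zero_top Rh.
have := cong_join Rh Rh Res_fzero Res_ftop (cong_refl Rh) zero_top.
by rewrite fjoin_fzero fjoin_ftop.
Qed.

Lemma cong_all h k : theta fzero ftop -> Res sup h -> Res sup k -> theta h k.
Proof.
move=> zero_top Rh Rk; apply: (cong_trans Rh Res_ftop Rk).
  exact: cong_ftop zero_top Rh.
exact: cong_sym Rk Res_ftop (cong_ftop zero_top Rk).
Qed.

End CompleteChain.

Theorem proposition2p2 (d : Order.disp_t) (T : orderType d)
  (sup : (T -> Prop) -> T) (Hsup : complete_sup sup)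
  (theta : (T -> T) -> (T -> T) -> Prop) :
  res_congruence sup theta ->
  (forall f g, Res sup f -> Res sup g -> (theta f g <-> f = g)) \/
  (forall f g, Res sup f -> Res sup g -> theta f g).
Proof.
move=> cong.
case: (classic (exists f g, [/\ Res sup f, Res sup g, theta f g & f <> g])).
- case=> f [g [Rf Rg fg f_neq_g]]; right => h k.
  exact/(cong_all Hsup cong)/(cong_fzero_ftop Hsup cong Rf Rg fg f_neq_g).
- move=> no_pair; left => f g Rf Rg; split=> [fg|<-]; last exact: (cong_refl cong).
  by apply: NNPP => f_neq_g; apply: no_pair; exists f, g.
Qed.
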